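(* Let $\Gamma$ be an infinite, connected, locally finite weighted graph, and let $X$ be a finite subset of its vertex set. Then the following are equivalent: (1) every function $f:X\to\mathbb{R}$ extends to a harmonic function on all of $\Gamma$; (2) there is no non-zero finitely supported function on $\Gamma$ that is harmonic on $\Gamma\setminus X$.
   Context: A weighted graph has undirected edges without loops or multiple edges, with weights $\omega_{xy}=\omega_{yx}>0$ and degrees $\deg x=\sum_{y\sim x}\omega_{xy}$. The Laplacian is $\Delta f(x)=f(x)-\frac{1}{\deg x}\sum_{y\sim x}\omega_{xy}f(y)$. A function $f$ is harmonic on a set $A$ of vertices if $\Delta f(x)=0$ for every $x\in A$, and harmonic if this holds for all vertices. *)

From HB Require Import structures.
From mathcomp Require Import all_boot all_order all_algebra.
From mathcomp Require Import reals.
Set Implicit Arguments. Unset Strict Implicit. Unset Printing Implicit Defensive.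
Import Order.TTheory GRing.Theory Num.Theory.
Local Open Scope ring_scope.

Record wgraph (R : realType) (V : eqType) := WGraph {
  nbr : V -> seq V;
  w : V -> V -> R;
  nbr_uniq : forall x, uniq (nbr x);
  nbr_sym : forall x y, (y \in nbr x) = (x \in nbr y);
  nbr_irrefl : forall x, x \notin nbr x;
  w_sym : forall x y, w x y = w y x;
  w_pos : forall x y, y \in nbr x -> 0 < w x y
}.

Section Graphs.
Variables (R : realType) (V : eqType) (G : wgraph R V).

Definition adj : rel V := fun x y => y \in nbr G x.

Definition deg (x : V) : R := \sum_(y <- nbr G x) w G x y.

Definition laplacian (f : V -> R) (x : V) : R :=
  f x - (deg x)^-1 * \sum_(y <- nbr G x) w G x y * f y.

Definition harmonic_on (A : pred V) (f : V -> R) : Prop :=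
  forall x, A x -> laplacian f x = 0.

Definition harmonic (f : V -> R) : Prop := forall x, laplacian f x = 0.

Definition connected : Prop :=
  forall x y : V, exists p : seq V, path adj x p /\ last x p = y.

Definition infinite_vertices : Prop := ~ exists s : seq V, forall v : V, v \in s.

Definition finitely_supported (f : V -> R) : Prop :=
  exists s : seq V, forall v, v \notin s -> f v = 0.

End Graphs.

From HB Require Import structures.
From mathcomp Require Import all_boot all_order all_algebra.
From mathcomp Require Import reals ring.
From Stdlib Require Import ClassicalEpsilon FunctionalExtensionality Classical.

(* (1) => (2): if u is finitely supported and harmonic off X, extend the values
   of its combinatorial Laplacian L u = deg * Delta u on X to a harmonic h. Green's
   identity sum h * L u = sum u * L h = 0 then says that the sum over X of (L u)^2
   vanishes, so u is harmonic, and the maximum principle on an infinite connected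
   graph forces u = 0.
   (2) => (1): on each finite set B one can prescribe on X the values of a
   function harmonic on B. Otherwise, by finite-dimensional duality, evaluation at
   some x in X is a combination of the Laplacians on B and the evaluations at the
   other points of X, and Green's identity turns the coefficients into a finitely
   supported u, harmonic off X, with L u x = 1. The spaces of solutions on growing
   balls, restricted to a fixed finite set, are nested subspaces of a
   finite-dimensional space, so they stabilize; this compactness lets the local
   solutions be glued into a global harmonic extension. *)

Set Implicit Arguments. Unset Strict Implicit. Unset Printing Implicit Defensive.
Import Order.TTheory GRing.Theory Num.Theory.
Local Open Scope ring_scope.

Lemma dependent_choice_nat (A : Type) (Q : nat -> A -> Prop)
    (next : nat -> A -> A -> Prop) :
  (exists a, Q 0%N a) ->
  (forall n a, Q n a -> exists a', Q n.+1 a' /\ next n a a') ->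
  exists s : nat -> A, forall n, Q n (s n) /\ next n (s n) (s n.+1).
Proof.
move=> [a0 Qa0] step; have inhA : inhabited A := inhabits a0.
pose fix s n := match n with
  | 0 => epsilon inhA (Q 0%N)
  | n'.+1 => epsilon inhA (fun a' => Q n'.+1 a' /\ next n' (s n') a') end.
have Qs n : Q n (s n).
  elim: n => [|n IH]; first exact: epsilon_spec (ex_intro _ a0 Qa0).
  exact: (epsilon_spec inhA _ (step n (s n) IH)).1.
by exists s => n; split; last exact: (epsilon_spec inhA _ (step n (s n) (Qs n))).2.
Qed.

Section SeqSums.
Variable R : nmodType.

Lemma sum_mem_swap (T : eqType) (A B : seq T) (g : T -> R) :
  uniq A -> uniq B -> \sum_(z <- A | z \in B) g z = \sum_(z <- B | z \in A) g z.
Proof.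
move=> uA uB; rewrite -[LHS]big_filter -[RHS]big_filter; apply: perm_big.
apply: uniq_perm; rewrite ?filter_uniq // => z.
by rewrite !mem_filter andbC.
Qed.

Lemma sum_seq_pred1 (T : eqType) (s : seq T) z0 (g : T -> R) :
  uniq s -> \sum_(z <- s) (if z == z0 then g z else 0) = if z0 \in s then g z0 else 0.
Proof.
elim: s => [|a s IH] /=; first by rewrite big_nil.
case/andP => nas us; rewrite big_cons IH // in_cons.
by have [<-|_] := eqVneq a z0; rewrite /= ?(negbTE nas) ?addr0 ?add0r.
Qed.

Lemma sum_cond_support (T : eqType) (s : seq T) (P : pred T) (g : T -> R) :
  (forall z, z \in s -> ~~ P z -> g z = 0) ->
  \sum_(z <- s | P z) g z = \sum_(z <- s) g z.
Proof.
move=> gP; rewrite big_mkcond; apply: eq_big_seq => z zs.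
by case: ifP => // /negbT /(gP z zs) ->.
Qed.

End SeqSums.

Lemma exists_seq_argmax (R : realDomainType) (T : eqType) (u : T -> R) (s : seq T) :
  s != [::] -> exists2 x0, x0 \in s & forall y, y \in s -> u y <= u x0.
Proof.
elim: s => [|a s IH] // _; have [->|/IH [b bs ub]] := eqVneq s [::].
  by exists a; rewrite ?mem_head // => y; rewrite mem_seq1 => /eqP ->.
have [ab|ba] := lerP (u a) (u b).
  by exists b => [|y]; rewrite ?in_cons ?bs ?orbT // => /orP [/eqP ->|/ub].
exists a => [|y]; first exact: mem_head.
by rewrite in_cons => /orP [/eqP -> //|/ub /le_trans]; apply; apply: ltW.
Qed.

Section LinearAlgebra.
Variable R : fieldType.

Definition linear_form (T : Type) (phi : (T -> R) -> R) :=
  forall a F H, phi (fun x => a * F x + H x) = a * phi F + phi H.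

Definition subspace (T : Type) (P : (T -> R) -> Prop) :=
  P (fun _ => 0) /\ forall a F H, P F -> P H -> P (fun x => a * F x + H x).

Section Forms.
Variables (T : Type) (J : eqType) (l : J -> (T -> R) -> R).
Hypothesis l_linear : forall j, linear_form (l j).

Definition common_kernel (I : seq J) (F : T -> R) := forall j, j \in I -> l j F = 0.

Lemma form_shift_kernel (phi : (T -> R) -> R) j (I : seq J) :
  linear_form phi -> (forall F, common_kernel (j :: I) F -> phi F = 0) ->
  exists c0, forall F, common_kernel I F -> phi F = c0 * l j F.
Proof.
move=> lphi ker.
have [[F0 [F0I F0j]]|none] :=
  classic (exists F0, common_kernel I F0 /\ l j F0 <> 0).
  exists (phi F0 / l j F0) => F FI.
  pose F' x := - (l j F / l j F0) * F0 x + F x.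
  have : phi F' = 0.
    apply: ker => k; rewrite in_cons => /orP [/eqP ->|kI].
      by rewrite l_linear; field; apply/eqP.
    by rewrite l_linear (F0I k kI) (FI k kI) mulr0 addr0.
  rewrite lphi => /eqP; rewrite addrC addr_eq0 => /eqP ->.
  by field; apply/eqP.
exists 0 => F FI; rewrite mul0r; apply: ker => k; rewrite in_cons.
case/orP => [/eqP ->|]; last exact: FI.
by apply: NNPP => Fj; apply: none; exists F.
Qed.

Lemma form_in_span (phi : (T -> R) -> R) (I : seq J) :
  uniq I -> linear_form phi -> (forall F, common_kernel I F -> phi F = 0) ->
  exists c : J -> R, forall F, phi F = \sum_(j <- I) c j * l j F.
Proof.
elim: I phi => [|j I IH] phi /=.
  by move=> _ _ ker; exists (fun _ => 0) => F; rewrite big_nil; apply: ker.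
case/andP=> jI uI lphi ker; have [c0 ker'] := form_shift_kernel lphi ker.
have lphi' : linear_form (fun F => phi F - c0 * l j F).
  by move=> a F H; rewrite lphi l_linear; ring.
have [c cE] : exists c : J -> R,
    forall F, phi F - c0 * l j F = \sum_(k <- I) c k * l k F.
  by apply: IH => // F /ker' ->; rewrite subrr.
exists (fun k => if k == j then c0 else c k) => F; rewrite big_cons eqxx.
rewrite (eq_big_seq (fun k => c k * l k F)) -?cE; first ring.
by move=> k kI; case: eqP kI => // ->; rewrite (negbTE jI).
Qed.

End Forms.

Lemma nested_le (T : Type) (P : nat -> T -> Prop) :
  (forall m F, P m.+1 F -> P m F) -> forall m m' F, (m <= m')%N -> P m' F -> P m F.
Proof.
move=> Pnest m m' F /subnKC <-; elim: (m' - m)%N => [|k IH]; first by rewrite addn0.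
by rewrite addnS => /Pnest /IH.
Qed.

Section Stabilization.
Variables (T : eqType) (P : nat -> (T -> R) -> Prop).
Hypothesis P_subspace : forall m, subspace (P m).
Hypothesis P_nested : forall m F, P m.+1 F -> P m F.

Lemma nested_subspaces_stabilize_cons s :
  (exists M, forall m F, (M <= m)%N -> P M F /\ F s = 0 -> P m F /\ F s = 0) ->
  exists M, forall m F, (M <= m)%N -> P M F -> P m F.
Proof.
move=> [M1 HM1].
have [[m2 [M1m2 vanish]]|escape] :=
  classic (exists m2, (M1 <= m2)%N /\ forall H, P m2 H -> H s = 0).
  exists m2 => m F m2m Pm2F.
  have PM1F : P M1 F := nested_le P_nested M1m2 Pm2F.
  by have [] := HM1 m F (leq_trans M1m2 m2m) (conj PM1F (vanish F Pm2F)).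
exists M1 => m F M1m PM1F.
have [H [PmH Hs]] : exists H, P m H /\ H s <> 0.
  apply: NNPP => noH; apply: escape; exists m; split => // H PH.
  by apply: NNPP => Hs; apply: noH; exists H.
pose c := F s / H s; pose K x := - c * H x + F x.
have PM1K : P M1 K by apply: (P_subspace M1).2 => //; apply: (nested_le P_nested M1m).
have Ks : K s = 0 by rewrite /K /c; field; apply/eqP.
have [PmK _] := HM1 m K M1m (conj PM1K Ks).
have -> : F = (fun x => c * H x + K x).
  by apply: functional_extensionality => x; rewrite /K; ring.
exact: (P_subspace m).2.
Qed.

End Stabilization.

Lemma nested_subspaces_stabilize (T : eqType) (S : seq T)
    (P : nat -> (T -> R) -> Prop) :
  (forall m, subspace (P m)) -> (forall m F, P m.+1 F -> P m F) ->
  (forall m F, P m F -> forall x, x \notin S -> F x = 0) ->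
  exists M, forall m F, (M <= m)%N -> P M F -> P m F.
Proof.
elim: S P => [|s S IH] P Psub Pnest Psupp.
  exists 0%N => m F _ /Psupp F0.
  have -> : F = (fun _ => 0) by apply: functional_extensionality => x; apply: F0.
  exact: (Psub m).1.
apply: (nested_subspaces_stabilize_cons Psub Pnest (s := s)).
apply: (IH (fun m F => P m F /\ F s = 0)) => [m|m F [PF Fs]|m F [PF Fs] x xS].
- split; first by split; [exact: (Psub m).1 |].
  move=> a F H [PF Fs] [PH Hs].
  by split; [apply: (Psub m).2 | rewrite Fs Hs mulr0 addr0].
- by split => //; apply: Pnest.
- have [-> //|xs] := eqVneq x s.
  by apply: (Psupp m F PF); rewrite in_cons negb_or xs.
Qed.

End LinearAlgebra.

Section CombinatorialLaplacian.
Variables (R : realType) (V : eqType) (G : wgraph R V).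

Definition comb_laplacian (f : V -> R) (x : V) : R :=
  \sum_(y <- nbr G x) w G x y * (f x - f y).

Definition comb_harmonic_on (B : seq V) (f : V -> R) :=
  forall z, z \in B -> comb_laplacian f z = 0.

Lemma comb_laplacian_deg f x :
  comb_laplacian f x = deg G x * f x - \sum_(y <- nbr G x) w G x y * f y.
Proof.
rewrite /comb_laplacian /deg mulr_suml -sumrB.
by apply: eq_bigr => y _; rewrite mulrBr.
Qed.

Lemma comb_laplacianE f x :
  deg G x != 0 -> comb_laplacian f x = deg G x * laplacian G f x.
Proof. by move=> d0; rewrite comb_laplacian_deg /laplacian mulrBr mulrA mulfV // mul1r. Qed.

Lemma comb_laplacian_lincomb (a : R) (F H : V -> R) x :
  comb_laplacian (fun y => a * F y + H y) x = a * comb_laplacian F x + comb_laplacian H x.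
Proof. by rewrite /comb_laplacian mulr_sumr -big_split; apply: eq_bigr => y _ /=; ring. Qed.

Lemma comb_laplacianZ (a : R) (F : V -> R) x :
  comb_laplacian (fun y => a * F y) x = a * comb_laplacian F x.
Proof. by rewrite /comb_laplacian mulr_sumr; apply: eq_bigr => y _ /=; ring. Qed.

Lemma comb_laplacian0 x : comb_laplacian (fun _ => 0) x = 0.
Proof. by rewrite /comb_laplacian big1 // => y _; rewrite subrr mulr0. Qed.

Lemma eq_comb_laplacian F H x : (forall y, y \in x :: nbr G x -> F y = H y) ->
  comb_laplacian F x = comb_laplacian H x.
Proof.
move=> FH; apply: eq_big_seq => y yx.
by rewrite !FH ?mem_head // in_cons yx orbT.
Qed.

Lemma deg_gt0 x : nbr G x != [::] -> 0 < deg G x.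
Proof.
rewrite /deg; case: (nbr G x) (@w_pos _ _ G x) => [|a s] // wpos _.
rewrite big_cons ltr_pwDl ?wpos ?mem_head // big_seq sumr_ge0 // => y ys.
by apply/ltW/wpos; rewrite in_cons ys orbT.
Qed.

Lemma comb_harmonic_max_nbr (u : V -> R) x y :
  (forall z, u z <= u x) -> comb_laplacian u x = 0 -> y \in nbr G x -> u y = u x.
Proof.
rewrite /comb_laplacian big_seq => umax /eqP; rewrite psumr_eq0; last first.
  by move=> z zx; rewrite mulr_ge0 ?subr_ge0 // ltW // w_pos.
move=> /allP all0 yx; move: (all0 y yx).
by rewrite yx mulf_eq0 subr_eq0 (gt_eqF (w_pos yx)) eq_sym => /eqP.
Qed.

Lemma sum_nbr_exchange (S T : seq V) (F : V -> V -> R) :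
  uniq S -> uniq T -> (forall y z, z \notin S -> F y z = 0) ->
  (forall x y, x \in S -> y \in nbr G x -> y \in T) ->
  \sum_(y <- T) \sum_(z <- nbr G y) F y z = \sum_(z <- S) \sum_(y <- nbr G z) F y z.
Proof.
move=> uS uT FS ST.
transitivity (\sum_(y <- T) \sum_(z <- S | z \in nbr G y) F y z).
  apply: eq_bigr => y _; rewrite -sum_mem_swap ?nbr_uniq // sum_cond_support //.
  by move=> z _; apply: FS.
under eq_bigr do rewrite big_mkcond /=.
rewrite exchange_big /=; apply: eq_big_seq => z zS; rewrite -big_mkcond /=.
under eq_bigl do rewrite -nbr_sym.
rewrite sum_mem_swap ?nbr_uniq // sum_cond_support // => y yz.
by rewrite (ST z y zS yz).
Qed.

Lemma green_identity (u h : V -> R) (S T : seq V) :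
  uniq S -> uniq T -> (forall z, z \notin S -> u z = 0) -> {subset S <= T} ->
  (forall x y, x \in S -> y \in nbr G x -> y \in T) ->
  \sum_(y <- T) h y * comb_laplacian u y = \sum_(x <- S) u x * comb_laplacian h x.
Proof.
move=> uS uT uSupp ST NT.
under eq_bigr do rewrite comb_laplacian_deg mulrBr mulr_sumr.
under [RHS]eq_bigr do rewrite comb_laplacian_deg mulrBr mulr_sumr.
rewrite !sumrB; congr (_ - _).
  rewrite -(sum_cond_support (P := mem S)); last by move=> z _ /uSupp ->; rewrite !mulr0.
  rewrite sum_mem_swap // sum_cond_support => [|z /ST -> //].
  by apply: eq_bigr => x _; ring.
pose E y z := h y * (w G y z * u z).
rewrite (sum_nbr_exchange (S := S) (T := T) (F := E)) //; last first.
  by move=> y z /uSupp uz; rewrite /E uz !mulr0.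
by apply: eq_bigr => x _; apply: eq_bigr => y _; rewrite /E w_sym; ring.
Qed.

Lemma green_identity_nbhd (u h : V -> R) (A S : seq V) :
  uniq S -> (forall z, z \notin S -> u z = 0) ->
  \sum_(y <- undup (A ++ S ++ flatten (map (nbr G) S))) h y * comb_laplacian u y =
  \sum_(x <- S) u x * comb_laplacian h x.
Proof.
move=> uS uSupp; apply: green_identity => // [|x xS|x y xS yx]; first exact: undup_uniq.
  by rewrite mem_undup !mem_cat xS orbT.
by rewrite mem_undup !mem_cat; apply/or3P/Or33/flatten_mapP; exists x.
Qed.

Lemma exists_fs_fundamental_solution (a b : V -> R) (S Y : seq V) x :
  uniq S ->
  (forall F, F x = \sum_(z <- S) a z * comb_laplacian F z + \sum_(y <- Y) b y * F y) ->
  exists2 u, finitely_supported u & forall y, y \notin Y -> comb_laplacian u y = (x == y)%:R.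
Proof.
(* Test the representation on the indicator of y and move the Laplacian onto u
   by Green's identity. *)
move=> uS repr; pose u z := if z \in S then a z else 0.
have uSupp z : z \notin S -> u z = 0 by rewrite /u => /negbTE ->.
exists u => [|y yY]; first by exists S.
pose d t : R := (t == y)%:R.
have Yd : \sum_(y' <- Y) b y' * d y' = 0.
  rewrite big_seq big1 // => y' y'Y; rewrite /d.
  by case: eqP y'Y => [->|_ _]; rewrite ?(negbTE yY) ?mulr0.
have := repr d; rewrite Yd addr0.
rewrite (eq_big_seq (fun z => u z * comb_laplacian d z)); last by move=> z zS; rewrite /u zS.
rewrite -(green_identity_nbhd _ [:: y] uS uSupp).
rewrite (eq_bigr (fun t => if t == y then comb_laplacian u t else 0)); last first.
  by move=> t _; rewrite /d; case: eqP; rewrite ?mul1r ?mul0r.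
by rewrite sum_seq_pred1 ?undup_uniq // mem_undup mem_head => <-.
Qed.

End CombinatorialLaplacian.

Section InfiniteConnectedGraph.
Variables (R : realType) (V : eqType) (G : wgraph R V).
Hypothesis infV : infinite_vertices V.
Hypothesis conG : connected G.

Lemma exists_other_vertex (x : V) : exists y, y != x.
Proof.
apply: NNPP => none; apply: infV; exists [:: x] => v; rewrite mem_seq1.
by apply: contraT => vx; case: none; exists v.
Qed.

Lemma nbr_neq_nil x : nbr G x != [::].
Proof.
have [y yx] := exists_other_vertex x; have [[|a p] [/= xp lp]] := conG x y.
  by rewrite -lp eqxx in yx.
by case/andP: xp => xa _; apply/eqP => nx; rewrite /adj nx in xa.
Qed.

Lemma deg_neq0 x : deg G x != 0.
Proof. by rewrite gt_eqF // deg_gt0 // nbr_neq_nil. Qed.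

Lemma laplacian_eq0_comb f x : (laplacian G f x = 0) <-> (comb_laplacian G f x = 0).
Proof.
rewrite comb_laplacianE ?deg_neq0 //; split=> [->|/eqP]; first by rewrite mulr0.
by rewrite mulf_eq0 (negbTE (deg_neq0 x)) => /eqP.
Qed.

Lemma comb_harmonic_max_path (u : V -> R) x p :
  (forall z, u z <= u x) -> (forall z, comb_laplacian G u z = 0) ->
  path (adj G) x p -> u (last x p) = u x.
Proof.
move=> umax harm; elim: p x umax => [|a p IH] x umax //= /andP [xa ap].
have ua : u a = u x := comb_harmonic_max_nbr umax (harm x) xa.
by rewrite IH // => z; rewrite ua.
Qed.

Lemma fs_comb_harmonic_le0 (u : V -> R) v :
  finitely_supported u -> (forall z, comb_laplacian G u z = 0) -> u v <= 0.
Proof.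
move=> [S uS] harm; rewrite leNgt; apply/negP => uv.
have vS : v \in S by apply: contraTT uv => /uS ->; rewrite ltxx.
have Sne : S != [::] by apply: contraTneq vS => ->.
have [x xS umaxS] := exists_seq_argmax u Sne.
have ux_gt0 : 0 < u x := lt_le_trans uv (umaxS v vS).
have umax z : u z <= u x.
  by case: (boolP (z \in S)) => [/umaxS //|/uS ->]; apply: ltW.
apply: infV; exists S => z; have [p [xp <-]] := conG x z.
apply: contraTT ux_gt0 => /uS.
by rewrite (comb_harmonic_max_path umax harm xp) => ->; rewrite ltxx.
Qed.

Lemma fs_comb_harmonic_eq0 (u : V -> R) v :
  finitely_supported u -> (forall z, comb_laplacian G u z = 0) -> u v = 0.
Proof.
move=> [S uS] harm; apply/eqP; rewrite eq_le fs_comb_harmonic_le0 //=; last by exists S.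
rewrite -oppr_le0 (fs_comb_harmonic_le0 (u := fun z => - u z)) //.
  by exists S => z /uS ->; rewrite oppr0.
move=> z; rewrite -[X in X = _](@eq_comb_laplacian _ _ G (fun y => -1 * u y)).
  by rewrite comb_laplacianZ harm mulr0.
by move=> y _; rewrite mulN1r.
Qed.

Section ExtensionProblem.
Variable X : seq V.

Lemma extension_no_fs_harmonic :
  (forall f : V -> R, exists h : V -> R, harmonic G h /\ forall x, x \in X -> h x = f x) ->
  ~ (exists u : V -> R, finitely_supported u /\ (exists v, u v <> 0) /\
       harmonic_on G (fun x => x \notin X) u).
Proof.
move=> extend [u [[S0 uS0] [[v uv] harmX]]]; apply: uv.
pose S := undup S0; pose T := undup (X ++ S ++ flatten (map (nbr G) S)).
have uS z : z \notin S -> u z = 0 by rewrite mem_undup; apply: uS0.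
have offX y : y \notin X -> comb_laplacian G u y = 0 by move/harmX/laplacian_eq0_comb.
have [h [harm_h hX]] := extend (comb_laplacian G u).
have : \sum_(y <- T) comb_laplacian G u y ^+ 2 = 0.
  rewrite -[RHS](_ : \sum_(x <- S) u x * comb_laplacian G h x = 0); last first.
    by rewrite big1 // => x _; rewrite (laplacian_eq0_comb _ _).1 ?mulr0.
  rewrite -(@green_identity_nbhd _ _ G u h X S (undup_uniq S0) uS); apply: eq_bigr => y _.
  by have [/hX ->|/offX ->] := boolP (y \in X); rewrite ?expr2 ?mulr0.
rewrite big_seq => /eqP; rewrite psumr_eq0 => [/allP comb0|y _]; last exact: sqr_ge0.
apply: fs_comb_harmonic_eq0; first by exists S.
move=> y; have [yX|/offX //] := boolP (y \in X).
have yT : y \in T by rewrite mem_undup mem_cat yX.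
by move: (comb0 y yT); rewrite yT sqrf_eq0 => /eqP.
Qed.

Hypothesis no_fs_harmonic : ~ (exists u : V -> R, finitely_supported u /\
  (exists v, u v <> 0) /\ harmonic_on G (fun x => x \notin X) u).

Lemma exists_comb_harmonic_indicator (B : seq V) x : x \in X ->
  exists E : V -> R, [/\ comb_harmonic_on G B E, E x = 1 &
    forall y, y \in X -> y != x -> E y = 0].
Proof.
move=> xX; apply: NNPP => noE.
pose S := undup B; pose Y := [seq y <- undup X | y != x].
pose l (j : V + V) (F : V -> R) :=
  match j with inl z => comb_laplacian G F z | inr y => F y end.
have l_lin j : linear_form (l j) by case: j => z a F H //=; rewrite comb_laplacian_lincomb.
have uI : uniq (map inl S ++ map inr Y).
  rewrite cat_uniq !map_inj_uniq ?filter_uniq ?undup_uniq //=; try by move=> ? ? [].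
  by rewrite andbT; apply/hasPn => _ /mapP [y _ ->]; apply/mapP => -[].
have ker F : common_kernel l (map inl S ++ map inr Y) F -> F x = 0.
  move=> FI; apply: NNPP => Fx; apply: noE; exists (fun z => (F x)^-1 * F z); split.
  - move=> z zB; have /= Fz := FI (inl z); rewrite comb_laplacianZ Fz ?mulr0 //.
    by rewrite mem_cat map_f // mem_undup.
  - by rewrite mulVf //; apply/eqP.
  - move=> y yX yx; have /= Fy := FI (inr y); rewrite Fy ?mulr0 //.
    by rewrite mem_cat map_f ?orbT // mem_filter yx mem_undup.
have [c cE] := form_in_span l_lin uI (fun a F H => erefl) ker.
have [u fs_u fund_u] : exists2 u, finitely_supported u &
    forall y, y \notin Y -> comb_laplacian G u y = (x == y)%:R.
  apply: (exists_fs_fundamental_solution (a := fun z => c (inl z)) (b := fun y => c (inr y)))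
    (undup_uniq B) _ => F.
  by rewrite cE big_cat !big_map.
have xY : x \notin Y by rewrite mem_filter eqxx.
apply: no_fs_harmonic; exists u; split => //; split.
  apply: NNPP => u0; have := fund_u x xY; rewrite eqxx.
  rewrite (@eq_comb_laplacian _ _ G _ (fun _ => 0)) ?comb_laplacian0.
    by move=> /eqP; rewrite eq_sym oner_eq0.
  by move=> y _; apply: NNPP => uy; apply: u0; exists y.
move=> y yX; apply/laplacian_eq0_comb; rewrite fund_u.
  by case: eqP yX => [<-|]; rewrite ?xX.
by rewrite mem_filter mem_undup (negbTE yX) andbF.
Qed.

Lemma exists_comb_harmonic_partial_extension (B : seq V) (f : V -> R) (s : seq V) :
  exists F, comb_harmonic_on G B F /\
    forall y, y \in X -> F y = if y \in s then f y else 0.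
Proof.
elim: s => [|x s [F [harmF FX]]].
  by exists (fun _ => 0); split => // z _; apply: comb_laplacian0.
have [xX|xNX] := boolP (x \in X); last first.
  exists F; split => // y yX; rewrite FX // in_cons.
  by case: eqVneq yX => [->|]; rewrite ?(negbTE xNX).
have [E [harmE Ex Ey]] := exists_comb_harmonic_indicator B xX.
exists (fun z => (f x - F x) * E z + F z); split.
  by move=> z zB; rewrite comb_laplacian_lincomb harmE // harmF // mulr0 addr0.
move=> y yX; rewrite in_cons; have [->|yx] /= := eqVneq y x.
  by rewrite Ex mulr1 subrK.
by rewrite Ey // mulr0 add0r FX.
Qed.

Lemma exists_comb_harmonic_on_extension (B : seq V) (f : V -> R) :
  exists F, comb_harmonic_on G B F /\ forall y, y \in X -> F y = f y.
Proof.
have [F [harmF FX]] := exists_comb_harmonic_partial_extension B f X.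
by exists F; split => // y yX; rewrite FX yX.
Qed.

Section Compactness.
Variables (v0 : V) (f : V -> R).

(* The centre v0 makes the balls exhaust V even when X is empty. *)
Fixpoint ball n : seq V :=
  if n is n'.+1 then ball n' ++ flatten (map (nbr G) (ball n')) else v0 :: X.

Lemma ballS n : {subset ball n <= ball n.+1}.
Proof. by move=> z zb /=; rewrite mem_cat zb. Qed.

Lemma ball_mono n m : (n <= m)%N -> {subset ball n <= ball m}.
Proof.
move=> /subnKC <-; elim: (m - n)%N => [|k IH] z; first by rewrite addn0.
by move=> /IH; rewrite addnS; apply: ballS.
Qed.

Lemma ball_nbr n x y : x \in ball n -> y \in nbr G x -> y \in ball n.+1.
Proof.
by move=> xb yx /=; rewrite mem_cat; apply/orP; right; apply/flatten_mapP; exists x.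
Qed.

Lemma ball_X x : x \in X -> x \in ball 0.
Proof. by move=> xX; rewrite in_cons xX orbT. Qed.

Lemma ball_exhaust z : exists n, z \in ball n.
Proof.
have [p [v0p <-]] := conG v0 z; exists (size p).
elim/last_ind: p v0p => [|p y IH]; first by rewrite mem_head.
rewrite rcons_path last_rcons size_rcons => /andP [/IH pb py].
exact: ball_nbr pb py.
Qed.

Definition extendable (A : seq V) (g : V -> R) :=
  forall m, exists F, [/\ comb_harmonic_on G (ball m) F, forall y, y \in X -> F y = f y
    & forall y, y \in A -> F y = g y].

(* The solutions (t, F) of the problem with data scaled by t form a vector space,
   whose traces on the finite set A' decrease with the radius m, hence stabilize;
   a solution with t = 1 at the stable radius then has its trace realized at
   every radius. *)
Lemma extendable_refine (A A' : seq V) (g : V -> R) : {subset A <= A'} ->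
  extendable A g -> exists g', extendable A' g' /\ forall y, y \in A -> g' y = g y.
Proof.
move=> AA' extg.
pose trace t (F : V -> R) (o : option V) :=
  if o is Some y then (if y \in A' then F y else 0) else t.
pose P m (T : option V -> R) := exists t F, [/\ comb_harmonic_on G (ball m) F,
  forall y, y \in X -> F y = t * f y, forall y, y \in A -> F y = t * g y & T =1 trace t F].
have P_subspace m : subspace (P m).
  split.
    exists 0, (fun _ => 0); split=> [z _|y _|y _|[y|] //=]; rewrite ?mul0r //.
      exact: comb_laplacian0.
    by case: ifP.
  move=> a T1 T2 [t1 [F1 [h1 X1 A1 e1]]] [t2 [F2 [h2 X2 A2 e2]]].
  exists (a * t1 + t2), (fun x => a * F1 x + F2 x); split.
  - by move=> z zb; rewrite comb_laplacian_lincomb h1 // h2 // mulr0 addr0.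
  - by move=> y yX; rewrite X1 // X2 //; ring.
  - by move=> y yA; rewrite A1 // A2 //; ring.
  - by move=> o; rewrite e1 e2; case: o => [y|] //=; case: ifP; rewrite ?mulr0 ?addr0.
have P_nested m T : P m.+1 T -> P m T.
  by case=> t [F [hF *]]; exists t, F; split => // z /ballS; apply: hF.
have P_supp m T : P m T -> forall o, o \notin None :: map Some A' -> T o = 0.
  case=> t [F [_ _ _ eT]] [y|]; rewrite ?mem_head // eT in_cons /=.
  by rewrite (mem_map (@Some_inj _)) => /negbTE ->.
have [M stable] := nested_subspaces_stabilize P_subspace P_nested P_supp.
have [FM [hM XM AM]] := extg M.
exists FM; split => // m.
have PM : P M (trace 1 FM).
  by exists 1, FM; split=> // [y /XM|y /AM] ->; rewrite mul1r.
have [t [F [hF XF _ eF]]] := stable (maxn m M) _ (leq_maxr _ _) PM.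
have t1 : t = 1 by have := eF None.
exists F; split.
- by move=> z /(ball_mono (leq_maxl m M)); apply: hF.
- by move=> y yX; rewrite XF // t1 mul1r.
- by move=> y yA'; have := eF (Some y); rewrite /= yA'.
Qed.

Lemma exists_comb_harmonic_extension :
  exists h, (forall x, comb_laplacian G h x = 0) /\ forall x, x \in X -> h x = f x.
Proof.
have ext0 : exists g, extendable (ball 0) g.
  have [g [extg _]] : exists g, extendable (ball 0) g /\ forall y, y \in [::] -> g y = f y.
    apply: extendable_refine => // m.
    by have [F [hF FX]] := exists_comb_harmonic_on_extension (ball m) f; exists F.
  by exists g.
have [gs gsP] := dependent_choice_nat
  (next := fun n g g' => forall y, y \in ball n -> g' y = g y) ext0
  (fun n g => extendable_refine (@ballS n)).
have gs_stable n n' y : y \in ball n -> (n <= n')%N -> gs n' y = gs n y.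
  move=> yb /subnKC <-; elim: (n' - n)%N => [|k IH]; first by rewrite addn0.
  by rewrite addnS (gsP _).2 ?IH // (ball_mono (leq_addr k n)).
pose N z := ex_minn (ball_exhaust z).
have ballN z : z \in ball (N z) by rewrite /N; case: ex_minnP.
pose h z := gs (N z) z.
have hE n y : y \in ball n -> h y = gs n y.
  move=> yb; rewrite /h; case: (leqP (N y) n) => [le|/ltnW le].
    by rewrite (gs_stable (N y)).
  by rewrite (gs_stable n).
exists h; split.
  move=> x; have [F [hF _ FE]] := (gsP (N x).+1).1 (N x).
  rewrite (eq_comb_laplacian (H := F)) ?hF // => y yx.
  have yb : y \in ball (N x).+1.
    by move: yx; rewrite in_cons => /orP [/eqP ->|]; [apply: ballS | apply: ball_nbr].
  by rewrite (hE _ _ yb) FE.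
move=> x xX; have [F [_ FX FE]] := (gsP 0%N).1 0%N.
by rewrite (hE 0%N) ?ball_X // -FE ?ball_X // FX.
Qed.

End Compactness.

Lemma no_fs_harmonic_extension (f : V -> R) :
  exists h : V -> R, harmonic G h /\ forall x, x \in X -> h x = f x.
Proof.
have [v0 _] : exists v0 : V, True.
  by apply: NNPP => noV; apply: infV; exists [::] => v; case: noV; exists v.
have [h [harm hX]] := exists_comb_harmonic_extension v0 f.
by exists h; split => // x; apply/laplacian_eq0_comb.
Qed.

End ExtensionProblem.

End InfiniteConnectedGraph.

Theorem proposition5p1 (R : realType) (V : eqType) (G : wgraph R V)
    (X : seq V) :
  infinite_vertices V -> connected G ->
  (forall f : V -> R, exists h : V -> R,
      harmonic G h /\ forall x, x \in X -> h x = f x)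
  <->
  ~ (exists u : V -> R, finitely_supported u /\ (exists v, u v <> 0) /\
       harmonic_on G (fun x => x \notin X) u).
Proof.
move=> infV conG; split; first exact: extension_no_fs_harmonic.
by move=> no_fs f; apply: no_fs_harmonic_extension.
Qed.
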